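(* Let $P=\{x\in\mathbb R^d\mid \langle a_i,x\rangle\le b_i,\ 1\le i\le n\}$ be a $d$-dimensional lattice polytope given by an irredundant system with primitive $a_i\in(\mathbb Z^d)^*$, and let $a_1,\dots,a_m$ be its core normals. Then the vertices of $\operatorname{conv}(a_1,\dots,a_m)$ are exactly $a_1,\dots,a_m$ (i.e., no $a_j$, $1\le j\le m$, is a convex combination of the others).
   Context: For rational $c>0$ the adjoint polytope is $P^{(c)}=\{x\mid \langle a_i,x\rangle\le b_i-c,\ 1\le i\le n\}$ (the system being irredundant with primitive normals). The $\mathbb Q$-codegree is defined by $\operatorname{qcd}(P)^{-1}=\max\{c>0\mid P^{(c)}\neq\emptyset\}$. Put $c_0=\operatorname{qcd}(P)^{-1}$ and $\operatorname{core}P=P^{(c_0)}$. A normal $a_i$ is a core normal if $\langle a_i,y\rangle=b_i-c_0$ for all $y\in\operatorname{core}P$; after relabeling, the core normals are $a_1,\dots,a_m$. *)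

(* Points of R^d are row vectors 'rV[R]_d over an arbitrary
   real field R (generalizing the real numbers); normals are integer row
   vectors 'rV[int]_d. *)
From HB Require Import structures.
From mathcomp Require Import all_boot all_order all_algebra.
Set Implicit Arguments. Unset Strict Implicit. Unset Printing Implicit Defensive.
Import Order.TTheory GRing.Theory Num.Theory.
Local Open Scope ring_scope.

Definition dotv (R : realFieldType) (d : nat) (u x : 'rV[R]_d) : R :=
  \sum_(k < d) u 0 k * x 0 k.

Definition intv (R : realFieldType) (d : nat) (v : 'rV[int]_d) : 'rV[R]_d :=
  map_mx (fun z : int => z%:~R) v.

Definition inP (R : realFieldType) (n d : nat) (a : 'I_n -> 'rV[int]_d)
  (b : 'I_n -> R) (x : 'rV[R]_d) : Prop :=
  forall i, dotv (intv R (a i)) x <= b i.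

Definition inAdj (R : realFieldType) (n d : nat) (a : 'I_n -> 'rV[int]_d)
  (b : 'I_n -> R) (c : R) (x : 'rV[R]_d) : Prop :=
  forall i, dotv (intv R (a i)) x <= b i - c.

Definition irredundant (R : realFieldType) (n d : nat)
  (a : 'I_n -> 'rV[int]_d) (b : 'I_n -> R) : Prop :=
  forall i, exists x : 'rV[R]_d,
    (forall j, j != i -> dotv (intv R (a j)) x <= b j) /\
    b i < dotv (intv R (a i)) x.

Definition primitive (d : nat) (v : 'rV[int]_d) : Prop :=
  \big[gcdz/0]_(k < d) v 0 k = 1.

Definition in_conv (R : realFieldType) (d : nat) (I : finType)
  (s : I -> 'rV[R]_d) (x : 'rV[R]_d) : Prop :=
  exists lam : I -> R, (forall k, 0 <= lam k) /\ \sum_k lam k = 1 /\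
    x = \sum_k lam k *: s k.

Definition lattice_polytope (R : realFieldType) (n d : nat)
  (a : 'I_n -> 'rV[int]_d) (b : 'I_n -> R) : Prop :=
  exists (N : nat) (V : 'I_N -> 'rV[int]_d),
    forall x, inP a b x <-> in_conv (fun k => intv R (V k)) x.

(* P is d-dimensional: it contains d+1 affinely independent points *)
Definition full_dim (R : realFieldType) (n d : nat)
  (a : 'I_n -> 'rV[int]_d) (b : 'I_n -> R) : Prop :=
  exists (x0 : 'rV[R]_d) (X : 'M[R]_d),
    inP a b x0 /\ (forall k, inP a b (x0 + row k X)) /\ row_free X.

(* c0 = qcd(P)^{-1} = max { c > 0 rational | P^(c) nonempty } *)
Definition is_qcd_inv (R : realFieldType) (n d : nat)
  (a : 'I_n -> 'rV[int]_d) (b : 'I_n -> R) (c0 : rat) : Prop :=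
  0 < c0 /\ (exists y, inAdj a b (ratr c0) y) /\
  forall c : rat, 0 < c -> (exists y, inAdj a b (ratr c) y) -> c <= c0.

(* a_i is a core normal: <a_i, y> = b_i - c0 for all y in core P = P^(c0) *)
Definition core_normal (R : realFieldType) (n d : nat)
  (a : 'I_n -> 'rV[int]_d) (b : 'I_n -> R) (c0 : rat) (i : 'I_n) : Prop :=
  forall y, inAdj a b (ratr c0) y -> dotv (intv R (a i)) y = b i - ratr c0.

(* Suppose a_j = sum_k lam_k a_k is a convex combination of core normals
   a_k (k <> j).  Evaluating the pairing at a point y of core P, where every
   core normal is tight (<a_k, y> = b_k - c0), and using sum_k lam_k = 1,
   gives b_j = sum_k lam_k b_k.  By irredundancy there is a point x
   satisfying every inequality except the j-th, so
   b_j < <a_j, x> = sum_k lam_k <a_k, x> <= sum_k lam_k b_k = b_j,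
   a contradiction.

   The theorem combines the two. *)
From HB Require Import structures.
From mathcomp Require Import all_boot all_order all_algebra.
Set Implicit Arguments. Unset Strict Implicit. Unset Printing Implicit Defensive.
Import Order.TTheory GRing.Theory Num.Theory.
Local Open Scope ring_scope.

Section ConvexCombinations.

Variables (R : realFieldType) (d : nat) (I : finType).
Variables (lam : I -> R) (v : I -> 'rV[R]_d).

Lemma dotv_combination (x : 'rV[R]_d) :
  dotv (\sum_i lam i *: v i) x = \sum_i lam i * dotv (v i) x.
Proof.
rewrite /dotv.
under eq_bigr => k _ do rewrite summxE big_distrl /=.
rewrite exchange_big /=; apply: eq_bigr => i _.
rewrite mulr_sumr; apply: eq_bigr => k _.
by rewrite mxE mulrA.
Qed.

Lemma dotv_combination_tight (beta : I -> R) (c : R) (y : 'rV[R]_d) :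
  \sum_i lam i = 1 ->
  (forall i, lam i != 0 -> dotv (v i) y = beta i - c) ->
  dotv (\sum_i lam i *: v i) y = \sum_i lam i * beta i - c.
Proof.
move=> lam_sum1 tight; rewrite dotv_combination.
have -> : \sum_i lam i * dotv (v i) y = \sum_i lam i * (beta i - c).
  apply: eq_bigr => i _.
  by have [->|nz] := eqVneq (lam i) 0; rewrite ?mul0r // tight.
by rewrite (eq_bigr _ (fun i _ => mulrBr _ _ _)) sumrB -mulr_suml lam_sum1 mul1r.
Qed.

Lemma dotv_combination_le (beta : I -> R) (x : 'rV[R]_d) :
  (forall i, 0 <= lam i) ->
  (forall i, lam i != 0 -> dotv (v i) x <= beta i) ->
  dotv (\sum_i lam i *: v i) x <= \sum_i lam i * beta i.
Proof.
move=> lam_ge0 bounded; rewrite dotv_combination; apply: ler_sum => i _.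
have [->|nz] := eqVneq (lam i) 0; first by rewrite !mul0r.
exact: (ler_wpM2l (lam_ge0 i) (bounded i nz)).
Qed.

End ConvexCombinations.

Theorem lemma3p5 (R : realFieldType) (n d : nat)
  (a : 'I_n -> 'rV[int]_d) (b : 'I_n -> R) (c0 : rat) :
  lattice_polytope a b -> full_dim a b -> irredundant a b ->
  (forall i, primitive (a i)) ->
  is_qcd_inv a b c0 ->
  forall j : 'I_n, core_normal a b c0 j ->
  ~ exists lam : 'I_n -> R,
      [/\ forall k, 0 <= lam k,
          forall k, lam k != 0 -> core_normal a b c0 k /\ k != j,
          \sum_k lam k = 1 &
          intv R (a j) = \sum_k lam k *: intv R (a k)].
Proof.
move=> _ _ irr _ [_ [[y y_core] _]] j core_j [lam [lam_ge0 lam_supp lam_sum1 a_j]].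
(* b_j is the same combination of the b_k, read off at the core point y. *)
have b_j : b j = \sum_k lam k * b k.
  have tight : forall k, lam k != 0 ->
      dotv (intv R (a k)) y = b k - ratr c0.
    by move=> k /lam_supp [core_k _]; exact: core_k.
  have := core_j y y_core.
  by rewrite a_j (dotv_combination_tight lam_sum1 tight) => /addIr.
have [x [x_other x_viol]] := irr j.
have : dotv (intv R (a j)) x <= b j.
  rewrite a_j b_j; apply: dotv_combination_le => // k /lam_supp [_ k_ne_j].
  exact: x_other.
by rewrite leNgt x_viol.
Qed.
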